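(* Assume (h) and (R-q) with $q=4$, and fix $h\in(0,h_0]$. (i) Let $p\ge4$ and let $(R_t)_{t\in\pi_h}$ be an $(\mathcal F_t)$-adapted sequence in $L^p$ with $\sup_{t\in\pi_h}\|1_{\{t\le\tau_h\}}R_t\|_{L^p}<\infty$. Then the sequence $(1_{\{t\le\tau_h\}}R_t)_{t\in\pi_h}$ belongs to $\mathcal V(\tau_h)$ and has finite norm $\|\cdot\|_{\tau_h}$. (ii) Every $S\in\mathcal V(\tau_h)$ with $\|S\|_{\tau_h}<\infty$ satisfies $\big(\frac1{1-3L_fh}\big)^{t/h}1_{\{t\le\tau_h\}}S_t^2\to0$ in $L^1$ as $t\to\infty$, $t\in\pi_h$.
   Context: $(\Omega,\mathcal F,(\mathcal F_t)_{t\ge0},\mathbb P)$ is a filtered probability space whose filtration is generated by a $d$-dimensional Brownian motion, augmented by null sets. $\tau$ is a stopping time and $L_f>0$ a constant. For $h>0$, $\pi_h=\{nh:n\in\mathbb N_0\}$, and for each $h\in(0,h_0]$ a finite $\pi_h$-valued stopping time $\tau_h$ is given. $\mathcal V(\tau_h)$ is the set of sequences $(R_t)_{t\in\pi_h}$ with $R_t\in L^2(\mathcal F_t)$ and $1_{\{t>\tau_h\}}R_t=0$ for all $t\in\pi_h$, with $\|R\|_{\tau_h}=\sum_{t\in\pi_h}\varphi(t)\|1_{\{t\le\tau_h\}}R_t\|_{L^2}$, $\varphi(t)=(1-3L_fh)^{-t/h}$. Assumptions: (h) $h_0<\min\{L_f,\frac1{12L_f}\}$ and $h\in(0,h_0]$.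 (R-q) for a parameter $q\ge2$: there is $\rho>4qL_f$ with $\exp(\rho\tau)\in L^1$ and $\sup_{h\in(0,h_0]}\exp(\rho\tau_h)\in L^1$. *)

From HB Require Import structures.
From mathcomp Require Import all_boot all_order all_algebra.
From mathcomp Require Import all_classical all_reals all_analysis.
Set Implicit Arguments. Unset Strict Implicit. Unset Printing Implicit Defensive.
Import Order.TTheory GRing.Theory Num.Theory.
Import numFieldNormedType.Exports.
Local Open Scope classical_set_scope.
Local Open Scope ring_scope.

Section defs.
Context {d : measure_display} {Omega : measurableType d} {R : realType}.

Definition is_filtration (F : R -> set (set Omega)) : Prop :=
  (forall t, 0 <= t -> sigma_algebra setT (F t)) /\
  (forall t, 0 <= t -> F t `<=` measurable) /\
  (forall s t, 0 <= s -> s <= t -> F s `<=` F t).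

Definition Gmeasurable (G : set (set Omega)) (f : Omega -> R) : Prop :=
  forall B : set R, measurable B -> G (f @^-1` B).

Definition stopping_time (F : R -> set (set Omega)) (tau : Omega -> \bar R) :=
  (forall w, (0 <= tau w)%E) /\
  (forall t, 0 <= t -> F t [set w | (tau w <= t%:E)%E]).

Definition finite_stopping_time (F : R -> set (set Omega)) (tau : Omega -> R) :=
  (forall w, 0 <= tau w) /\
  (forall t, 0 <= t -> F t [set w | tau w <= t]).

Definition pi_valued (h : R) (tau : Omega -> R) :=
  forall w, exists n : nat, tau w = n%:R * h.

Definition inLp (P : probability Omega R) (p : R) (f : Omega -> R) : Prop :=
  measurable_fun setT f /\ ('N[P]_(p%:E)[EFin \o f] < +oo)%E.

Definition phi (Lf h t : R) : R := powR ((1 - 3 * Lf * h)^-1) (t / h).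

Definition ind (tau : Omega -> R) (t : R) (w : Omega) : R := if t <= tau w then 1 else 0.

Definition tgrid (h : R) (n : nat) : R := n%:R * h.

(* membership of (S_t)_{t in pi_h} (indexed by n, t = n h) in V(tau_h) *)
Definition in_V (P : probability Omega R) (F : R -> set (set Omega)) (h : R)
    (tau : Omega -> R) (S : nat -> Omega -> R) : Prop :=
  forall n : nat,
    Gmeasurable (F (tgrid h n)) (S n) /\ inLp P 2 (S n) /\
    {ae P, forall w, tgrid h n > tau w -> S n w = 0}.

Definition normV (P : probability Omega R) (Lf h : R) (tau : Omega -> R)
    (S : nat -> Omega -> R) : \bar R :=
  (\sum_(0 <= n <oo)
     ((phi Lf h (tgrid h n))%:E *
      'N[P]_(2%:E)[EFin \o (fun w => (ind tau (tgrid h n) w * S n w)%R)]))%E.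

End defs.

(* Write g_t for the indicator of {t <= tau_h}. For p >= 4, Hoelder's inequality with
   the exponents p/2 and p/(p-2) gives
     ||g_t R_t||_2 <= ||g_t R_t||_p P(t <= tau_h)^(1/4),
   and the exponential moment of tau_h gives the Chernoff bound
   P(t <= tau_h) <= C exp(-rho t). Hence phi(t) ||g_t R_t||_2 is dominated by a geometric
   sequence of ratio (1 - 3 L_f h)^(-1) exp(-rho h / 4), which is < 1 because
   rho > 16 L_f and h < 1/(12 L_f).
   For (ii), phi >= 1 bounds ||phi(t) g_t S_t^2||_1 = phi(t) ||g_t S_t||_2^2 by the square
   of the t-th term of the convergent series ||S||_tau_h, and these terms tend to 0. *)

From HB Require Import structures.
From mathcomp Require Import all_boot all_order all_algebra.
From mathcomp Require Import all_classical all_reals all_analysis.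
From mathcomp Require Import ring lra measurable_realfun.
Set Implicit Arguments.
Unset Strict Implicit.
Unset Printing Implicit Defensive.

Import Order.TTheory GRing.Theory Num.Theory.
Import numFieldNormedType.Exports.
Local Open Scope classical_set_scope.
Local Open Scope ring_scope.

Section sigma_algebra_closure.
Context {T : Type} {G : set (set T)} (sG : sigma_algebra setT G).

Lemma sigma_algebra_setC A : G A -> G (~` A).
Proof. by case: sG => _ GC _ /GC; rewrite setTD. Qed.

Lemma sigma_algebra_setT : G setT.
Proof. by rewrite -setC0; apply: sigma_algebra_setC; case: sG. Qed.

Lemma sigma_algebra_setU A B : G A -> G B -> G (A `|` B).
Proof.
move=> GA GB; case: sG => G0 _ GU.
by rewrite -bigcup2E; apply: GU => -[|[|n]].
Qed.

Lemma sigma_algebra_setI A B : G A -> G B -> G (A `&` B).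
Proof.
move=> GA GB; rewrite -[A `&` B]setCK setCI.
by apply/sigma_algebra_setC/sigma_algebra_setU; apply: sigma_algebra_setC.
Qed.

End sigma_algebra_closure.

Section Gmeasurable.
Context {d : measure_display} {Omega : measurableType d} {R : realType}.
Implicit Types (G : set (set Omega)) (f tau : Omega -> R).

Lemma Gmeasurable_measurable G f :
  G `<=` measurable -> Gmeasurable G f -> measurable_fun setT f.
Proof. by move=> GM Gf _ B mB; rewrite setTI; apply/GM/Gf. Qed.

Lemma Gmeasurable_indM G tau t f : sigma_algebra setT G ->
  G [set w | t <= tau w] -> Gmeasurable G f ->
  Gmeasurable G (fun w => ind tau t w * f w).
Proof.
move=> sG Gt Gf B mB.
have -> : (fun w => ind tau t w * f w) @^-1` B =
    ([set w | t <= tau w] `&` f @^-1` B) `|`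
    (~` [set w | t <= tau w] `&` (if pselect (B 0) then setT else set0)).
  apply/seteqP; split => w /=; rewrite /ind.
  - case: ifPn => tw; first by rewrite mul1r => Bw; left.
    by rewrite mul0r => B0; right; split => //; case: pselect.
  - case=> -[tw Bw]; first by rewrite ifT// mul1r.
    by rewrite ifF ?mul0r; [case: pselect Bw | apply/negbTE/negP].
apply: (sigma_algebra_setU sG).
  by apply: (sigma_algebra_setI sG) => //; exact: Gf.
apply: (sigma_algebra_setI sG); first exact: (sigma_algebra_setC sG).
by case: (pselect (B 0)) => ?; [exact: sigma_algebra_setT | case: sG].
Qed.

Lemma Gmeasurable_cst G (c : R) : sigma_algebra setT G -> Gmeasurable G (cst c).
Proof.
move=> sG B mB; rewrite preimage_cst.
by case: ifPn => ?; [exact: sigma_algebra_setT | case: sG].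
Qed.

Lemma Gmeasurable_ind G tau t : sigma_algebra setT G ->
  G [set w | t <= tau w] -> Gmeasurable G (ind tau t).
Proof.
move=> sG Gt; rewrite (_ : ind tau t = fun w => ind tau t w * 1).
  by apply: Gmeasurable_indM => //; exact: Gmeasurable_cst.
by apply/funext => w; rewrite mulr1.
Qed.

Lemma tgrid_ge0 (h : R) n : 0 <= h -> 0 <= tgrid h n.
Proof. by move=> h0; rewrite /tgrid mulr_ge0. Qed.

(* A pi_h-valued time reaches t_(k+1) exactly when it has not stopped by t_k. *)
Lemma pi_valued_stopping_time_ge (F : R -> set (set Omega)) tau h n :
  is_filtration F -> 0 < h -> pi_valued h tau -> finite_stopping_time F tau ->
  F (tgrid h n) [set w | tgrid h n <= tau w].
Proof.
move=> [Fsa [_ Fmon]] h0 piv [tau0 tauF].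
have tg0 k : 0 <= tgrid h k by rewrite tgrid_ge0// ltW.
case: n => [|k].
  rewrite (_ : [set w | tgrid h 0 <= tau w] = setT).
    exact: sigma_algebra_setT (Fsa _ (tg0 0%N)).
  by apply/seteqP; split => w //= _; rewrite /tgrid mul0r tau0.
have -> : [set w | tgrid h k.+1 <= tau w] = ~` [set w | tau w <= tgrid h k].
  apply/seteqP; split => w /=; have [m ->] := piv w.
    rewrite /tgrid !ler_pM2r// !ler_nat => km mk.
    by have := leq_trans km mk; rewrite ltnn.
  by rewrite /tgrid !ler_pM2r// !ler_nat => /negP; rewrite -ltnNge.
apply: (sigma_algebra_setC (Fsa _ (tg0 k.+1))).
apply: (Fmon (tgrid h k)) => //; last exact: tauF.
by rewrite /tgrid ler_pM2r// ler_nat.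
Qed.

End Gmeasurable.

Section poweR_sqr.
Context {R : realType}.
Local Open Scope ereal_scope.

Lemma poweR2 (x : \bar R) : 0 <= x -> x `^ 2 = x * x.
Proof.
case: x => [r||] //= r0; last by rewrite pnatr_eq0 mulyy.
by rewrite powR_mulrn -?lee_fin// -EFinM expr2.
Qed.

Lemma poweR2K (x : \bar R) : 0 <= x -> (x `^ 2) `^ 2^-1 = x.
Proof. by move=> x0; rewrite -poweRrM mulfV// poweRe1. Qed.

End poweR_sqr.

Section Lnorm.
Context {d : measure_display} {T : measurableType d} {R : realType}.
Variable mu : {measure set T -> \bar R}.
Local Open Scope ereal_scope.

Lemma Lnorm_sqr (X : T -> R) (p : R) : (0 < p)%R ->
  'N[mu]_((p / 2)%:E)[EFin \o (fun w => X w ^+ 2)%R] =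
  'N[mu]_(p%:E)[EFin \o X] `^ 2.
Proof.
move=> p0; rewrite unlock -poweRrM; congr (_ `^ _); last first.
  by rewrite invf_div mulrC.
apply: eq_integral => w _; rewrite /= normrX.
by rewrite -powR_mulrn// -powRrM mulrC divfK.
Qed.

Lemma Lnorm_indicator (g : T -> R) (b : R) : (0 < b)%R ->
  (forall w, g w = 0 \/ g w = 1)%R ->
  'N[mu]_(b%:E)[EFin \o g] = (\int[mu]_w (g w)%:E) `^ b^-1.
Proof.
move=> b0 g01; rewrite unlock; congr (_ `^ _); apply: eq_integral => w _ /=.
by case: (g01 w) => ->; rewrite ?normr0 ?normr1 ?powR1// powR0// gt_eqF.
Qed.

(* Hoelder's inequality for X^2 and g with the conjugate exponents p/2 and p/(p-2). *)
Lemma hoelder_Lnorm2_indicator (X g : T -> R) (p : R) :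
  measurable_fun setT X -> measurable_fun setT g ->
  (forall w, g w = 0 \/ g w = 1)%R -> (forall w, X w = g w * X w)%R ->
  (2 < p)%R ->
  'N[mu]_2%:E[EFin \o X] `^ 2 <=
  'N[mu]_p%:E[EFin \o X] `^ 2 * (\int[mu]_w (g w)%:E) `^ (1 - 2 / p).
Proof.
move=> mX mg g01 XgX p2.
have p0 : (0 < p)%R by apply: lt_trans p2.
have p20 : (0 < p - 2)%R by rewrite subr_gt0.
have mX2 : measurable_fun setT (fun w => X w ^+ 2)%R.
  by under eq_fun do rewrite expr2; exact: measurable_funM.
have ab : ((p / 2)^-1 + (p / (p - 2))^-1 = 1)%R.
  by rewrite !invf_div; field; rewrite gt_eqF.
have X2g w : (X w ^+ 2 * g w = X w ^+ 2)%R.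
  by case: (g01 w) => gw; rewrite gw ?mulr1// mulr0 XgX gw mul0r expr2 mulr0.
have := hoelder mu mX2 mg (divr_gt0 p0 (ltr0n _ 2)) (divr_gt0 p0 p20) ab.
rewrite Lnorm_sqr// (Lnorm_indicator _ g01) ?divr_gt0//.
rewrite invf_div (_ : ((p - 2) / p = 1 - 2 / p)%R); last by field; rewrite gt_eqF.
rewrite Lnorm1 poweR_Lnorm//; congr (_ <= _); apply: eq_integral => w _.
by rewrite /= X2g powR_mulrn// normrX.
Qed.

Lemma Lnorm1_scale_sqr (c : R) (Y : T -> R) : (0 <= c)%R ->
  measurable_fun setT Y ->
  'N[mu]_1[EFin \o (fun w => c * Y w ^+ 2)%R] = c%:E * 'N[mu]_2%:E[EFin \o Y] `^ 2.
Proof.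
move=> c0 mY; rewrite Lnorm1 poweR_Lnorm// -ge0_integralZl_EFin//.
- apply: eq_integral => w _ /=; rewrite ger0_norm ?(mulr_ge0 c0 (sqr_ge0 _))//.
  by rewrite powR_mulrn// real_normK ?num_real.
- by move=> w _; exact: poweR_ge0.
apply: measurableT_comp (measurable_poweR _) _.
by apply: measurableT_comp => //; exact/measurable_EFinP.
Qed.

End Lnorm.

Section probability_Lnorm.
Context {d : measure_display} {T : measurableType d} {R : realType}.
Variable P : probability T R.
Local Open Scope ereal_scope.

Lemma integral_indicator_le1 (g : T -> R) : measurable_fun setT g ->
  (forall w, g w = 0 \/ g w = 1)%R -> 0 <= \int[P]_w (g w)%:E <= 1.
Proof.
move=> mg g01; have g0 w : 0 <= (g w)%:E by case: (g01 w) => ->.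
rewrite integral_ge0//=; apply: (@le_trans _ _ (\int[P]_w (cst 1 w))).
  apply: ge0_le_integral => //; first exact/measurable_EFinP.
  by move=> w _; case: (g01 w) => ->.
by rewrite integral_cst// mul1e probability_le1.
Qed.

Lemma Lnorm2_le_Lnorm_indicator (X g : T -> R) (p : R) :
  measurable_fun setT X -> measurable_fun setT g ->
  (forall w, g w = 0 \/ g w = 1)%R -> (forall w, X w = g w * X w)%R ->
  (4 <= p)%R ->
  'N[P]_2%:E[EFin \o X] <=
  'N[P]_p%:E[EFin \o X] * (\int[P]_w (g w)%:E) `^ 4^-1.
Proof.
move=> mX mg g01 XgX p4.
have /andP[I0 I1] := integral_indicator_le1 mg g01.
have mass_pow :
    (\int[P]_w (g w)%:E) `^ (1 - 2 / p) <= (\int[P]_w (g w)%:E) `^ 2^-1.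
  have Ifin : \int[P]_w (g w)%:E \is a fin_num.
    by rewrite ge0_fin_numE// (le_lt_trans I1 (ltry _)).
  move: I0 I1; rewrite -(fineK Ifin) !lee_fin.
  move: (fine _) => i i0 i1; have [->|i_neq0] := eqVneq i 0%R.
    by rewrite !powR0 ?invr_neq0// subr_eq0 eq_sym lt_eqF// ltr_pdivrMr; lra.
  apply: ger_powR; first by rewrite lt0r i_neq0 i0.
  have : (2 / p <= 2^-1)%R by rewrite ler_pdivrMr; lra.
  lra.
rewrite -[X in X <= _]poweR2K ?Lnorm_ge0// -[X in _ <= X]poweR2K; last first.
  by rewrite mule_ge0 ?Lnorm_ge0 ?poweR_ge0.
apply: gt0_ler_poweR; rewrite ?in_itv/= ?poweR_ge0 ?leey//.
rewrite poweRM ?Lnorm_ge0 ?poweR_ge0// -poweRrM (_ : (4^-1 * 2 = 2^-1)%R); last by field.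
have p2 : (2 < p)%R by lra.
have := hoelder_Lnorm2_indicator P mX mg g01 XgX p2.
move/le_trans; apply; apply: lee_wpmul2l => //; exact: poweR_ge0.
Qed.

End probability_Lnorm.

Section series.
Context {R : realType}.
Local Open Scope ereal_scope.

Lemma eseries_geometric_lty (K q : R) : (0 <= q < 1)%R ->
  \sum_(0 <= n <oo) (K * q ^+ n)%:E < +oo.
Proof.
move=> /andP[q0 q1].
have cv : (fun N => \sum_(0 <= n < N) (K * q ^+ n)%:E) @ \oo --> (K / (1 - q))%:E.
  apply: cvg_EFin; first by apply: nearW => N; rewrite sumEFin.
  rewrite (_ : _ \o _ = series (geometric K q)).
    by apply: cvg_geometric_series; rewrite ger0_norm.
  by apply/funext => N /=; rewrite sumEFin.
by rewrite (cvg_lim _ cv)// ltry.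
Qed.

Lemma nneseries_lty_cvg0 (a : nat -> \bar R) : (forall n, 0 <= a n) ->
  \sum_(0 <= n <oo) a n < +oo -> a @ \oo --> 0.
Proof.
move=> a0 sa; have := nneseries_tail_cvg sa (fun k _ => a0 k).
apply: (squeeze_cvge _ (cvg_cst _)); apply: nearW => n; rewrite a0 /=.
by have := @nneseries_lim_ge R a xpredT n n.+1 (fun k _ _ => a0 k); rewrite big_nat1.
Qed.

End series.

Section indicator.
Context {d : measure_display} {T : measurableType d} {R : realType}.
Variable mu : {measure set T -> \bar R}.
Local Open Scope ereal_scope.

Lemma ind01 (tau : T -> R) t w : ind tau t w = 0%R \/ ind tau t w = 1%R.
Proof. by rewrite /ind; case: ifP; [right | left]. Qed.

Lemma ind_sqr (tau : T -> R) t w : (ind tau t w ^+ 2 = ind tau t w)%R.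
Proof. by case: (ind01 tau t w) => ->; rewrite ?expr0n ?expr1n. Qed.

Lemma indK (tau : T -> R) t x w :
  (ind tau t w * (ind tau t w * x) = ind tau t w * x)%R.
Proof. by case: (ind01 tau t w) => ->; rewrite ?mul0r ?mul1r. Qed.

Lemma chernoff_ind (tau : T -> R) (G : T -> \bar R) (rho t : R) :
  (0 <= rho)%R -> measurable_fun setT G -> measurable_fun setT (ind tau t) ->
  (forall w, (expR (rho * tau w))%:E <= G w) ->
  \int[mu]_w (ind tau t w)%:E <= (expR (- (rho * t)))%:E * \int[mu]_w G w.
Proof.
move=> rho0 mG mi HG.
have G0 w : 0 <= G w by apply: le_trans (HG w); rewrite lee_fin expR_ge0.
rewrite -ge0_integralZl_EFin//; apply: ge0_le_integral => //.
- by move=> w _; case: (ind01 tau t w) => ->.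
- exact/measurable_EFinP.
- exact: emeasurable_funM.
move=> w _; rewrite /ind; case: ifPn => tw; last by rewrite mule_ge0 ?lee_fin ?expR_ge0.
apply: (@le_trans _ _ ((expR (- (rho * t)))%:E * (expR (rho * tau w))%:E)).
  rewrite -EFinM -expRD lee_fin; apply: le_trans (expR_ge1Dx _).
  by rewrite lerDl addrC subr_ge0; apply: ler_wpM2l.
by rewrite lee_pmul2l// ?lte_fin ?expR_gt0.
Qed.

End indicator.

Section grid_weight.
Context {R : realType}.
Implicit Types Lf h rho : R.

Lemma phi_grid Lf h n : 0 < h -> 0 < 1 - 3 * Lf * h ->
  phi Lf h (tgrid h n) = ((1 - 3 * Lf * h)^-1) ^+ n.
Proof.
by move=> h0 a0; rewrite /phi /tgrid mulfK ?gt_eqF// powR_mulrn// invr_ge0 ltW.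
Qed.

Lemma phi_grid_ge1 Lf h n : 0 <= Lf -> 0 < h -> 0 < 1 - 3 * Lf * h ->
  1 <= phi Lf h (tgrid h n).
Proof.
move=> Lf0 h0 a0; rewrite phi_grid// exprn_ege1// invf_ge1//.
by rewrite lerBlDr lerDl !mulr_ge0// ltW.
Qed.

(* exp (rho h / 4) >= 1 + rho h / 4 > 1 + 4 Lf h, and
   (1 - 3u)(1 + 4u) = 1 + u - 12 u^2 > 1 for 0 < u < 1/12. *)
Lemma grid_ratio_lt1 Lf h rho : 0 < Lf * h -> 12 * (Lf * h) < 1 ->
  4 * 4 * Lf < rho -> 0 < h ->
  (1 - 3 * Lf * h)^-1 * expR (- (4^-1 * (rho * h))) < 1.
Proof.
move=> u0 u12 rhoL h0.
have a0 : 0 < 1 - 3 * Lf * h by rewrite -mulrA; lra.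
rewrite expRN -invfM invf_lt1; last by rewrite mulr_gt0// expR_gt0.
have ex := expR_ge1Dx (4^-1 * (rho * h)).
have rh : 4 * (Lf * h) < 4^-1 * (rho * h) by nra.
move: ex rh a0 u12 u0; rewrite -mulrA.
set e := expR _; set y := 4^-1 * _; set u := Lf * h; nra.
Qed.

End grid_weight.

Definition cutoff {d} {Omega : measurableType d} {R : realType}
    (tau : Omega -> R) (h : R) (Rs : nat -> Omega -> R) (n : nat) (w : Omega) : R :=
  ind tau (tgrid h n) w * Rs n w.

Section grid.
Context {d : measure_display} {Omega : measurableType d} {R : realType}.
Variables (P : probability Omega R) (F : R -> set (set Omega)) (h : R).
Variable T : Omega -> R.
Hypotheses (F_filt : is_filtration F) (h_gt0 : 0 < h).
Hypotheses (T_pi : pi_valued h T) (T_stop : finite_stopping_time F T).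
Local Open Scope ereal_scope.

Lemma sigma_algebra_grid n : sigma_algebra setT (F (tgrid h n)).
Proof. by case: F_filt => + _; apply; apply/tgrid_ge0/ltW. Qed.

Lemma Gmeasurable_ind_grid n : Gmeasurable (F (tgrid h n)) (ind T (tgrid h n)).
Proof.
exact: Gmeasurable_ind (sigma_algebra_grid n)
  (pi_valued_stopping_time_ge n F_filt h_gt0 T_pi T_stop).
Qed.

Lemma Gmeasurable_measurable_grid n (f : Omega -> R) :
  Gmeasurable (F (tgrid h n)) f -> measurable_fun setT f.
Proof.
apply: Gmeasurable_measurable.
by case: F_filt => _ [+ _]; apply; apply/tgrid_ge0/ltW.
Qed.

Lemma measurable_ind_grid n : measurable_fun setT (ind T (tgrid h n)).
Proof. exact/Gmeasurable_measurable_grid/Gmeasurable_ind_grid. Qed.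

Lemma normV_lty_cvg0 (Lf : R) (S : nat -> Omega -> R) :
  (forall n, 1 <= phi Lf h (tgrid h n))%R ->
  in_V P F h T S -> normV P Lf h T S < +oo ->
  (fun n => 'N[P]_1[EFin \o (fun w =>
      phi Lf h (tgrid h n) * ind T (tgrid h n) w * S n w ^+ 2)%R]) @ \oo --> 0.
Proof.
move=> phi_ge1 SV; rewrite /normV.
set N2 := fun n => 'N[P]_2%:E[EFin \o (fun w => ind T (tgrid h n) w * S n w)%R].
set a := fun n => (phi Lf h (tgrid h n))%:E * N2 n.
have phi_ge0 n : (0 <= phi Lf h (tgrid h n))%R by apply: le_trans (phi_ge1 n).
have a_ge0 n : 0 <= a n by rewrite mule_ge0 ?lee_fin ?Lnorm_ge0.
move=> /(nneseries_lty_cvg0 a_ge0) a_cvg0.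
have aa_cvg0 : (fun n => a n * a n) @ \oo --> 0.
  by rewrite -(mule0 0); apply: cvgeM.
apply: (@squeeze_cvge _ _ _ _ (cst 0) _ _ _ _ (cvg_cst _) aa_cvg0).
apply: nearW => n /=; rewrite Lnorm_ge0 /=.
have mS : measurable_fun setT (fun w => ind T (tgrid h n) w * S n w)%R.
  by apply: measurable_funM; [exact: measurable_ind_grid | case: (SV n) => _ [[]]].
rewrite (eq_Lnorm _ _ (g := EFin \o (fun w =>
  phi Lf h (tgrid h n) * (ind T (tgrid h n) w * S n w) ^+ 2)%R)); last first.
  by move=> w /=; rewrite exprMn ind_sqr [in RHS]mulrA.
rewrite Lnorm1_scale_sqr// poweR2 ?Lnorm_ge0// /a muleACA.
apply: lee_wpmul2r; first by rewrite mule_ge0 ?Lnorm_ge0.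
by rewrite -EFinM lee_fin ler_peMl.
Qed.

Variables (p M rho : R) (Rs : nat -> Omega -> R) (G : Omega -> \bar R).
Hypotheses (p_ge4 : (4 <= p)%R)
  (Rs_adapted : forall n, Gmeasurable (F (tgrid h n)) (Rs n))
  (cutoff_bounded : forall n, 'N[P]_p%:E[EFin \o cutoff T h Rs n] <= M%:E).
Hypotheses (rho_ge0 : (0 <= rho)%R) (G_int : P.-integrable setT G)
  (G_ge : forall w, (expR (rho * T w))%:E <= G w).

Lemma measurable_cutoff n : measurable_fun setT (cutoff T h Rs n).
Proof.
exact/measurable_funM/(Gmeasurable_measurable_grid (Rs_adapted n))/measurable_ind_grid.
Qed.

Lemma G_ge0 w : 0 <= G w.
Proof. by apply: le_trans (G_ge w); rewrite lee_fin expR_ge0. Qed.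

Lemma integral_G_fineK : \int[P]_w G w = (fine (\int[P]_w G w))%:E.
Proof.
have /integrableP[_ G_fin] := G_int.
have -> : \int[P]_w G w = \int[P]_w `|G w|.
  by apply: eq_integral => w _; rewrite gee0_abs ?G_ge0.
by rewrite fineK// ge0_fin_numE ?integral_ge0.
Qed.

Lemma fine_integral_G_ge0 : (0 <= fine (\int[P]_w G w))%R.
Proof.
by rewrite -lee_fin -integral_G_fineK integral_ge0// => w _; exact: G_ge0.
Qed.

Lemma Lnorm2_cutoff_le n : 'N[P]_2%:E[EFin \o cutoff T h Rs n] <=
  (M * (expR (- (rho * tgrid h n)) * fine (\int[P]_w G w)) `^ 4^-1)%:E.
Proof.
have mi := measurable_ind_grid n.
have /integrableP[mG _] := G_int.
have cutoffE w : (cutoff T h Rs n w = ind T (tgrid h n) w * cutoff T h Rs n w)%R.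
  by rewrite /cutoff indK.
apply: le_trans (Lnorm2_le_Lnorm_indicator P (measurable_cutoff n) mi (ind01 _ _)
  cutoffE p_ge4) _.
rewrite EFinM; apply: lee_pmul; rewrite ?Lnorm_ge0 ?poweR_ge0//.
rewrite -poweR_EFin; apply: gt0_ler_poweR; rewrite ?in_itv/= ?leey ?integral_ge0//.
- by move=> w _; case: (ind01 T (tgrid h n) w) => ->.
- by rewrite lee_fin mulr_ge0 ?expR_ge0 ?fine_integral_G_ge0.
by rewrite EFinM -integral_G_fineK chernoff_ind.
Qed.

Lemma cutoff_in_V : in_V P F h T (cutoff T h Rs).
Proof.
move=> n; split.
  exact: Gmeasurable_indM (sigma_algebra_grid n)
    (pi_valued_stopping_time_ge n F_filt h_gt0 T_pi T_stop) (Rs_adapted n).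
split; last by apply: aeW => w; rewrite /cutoff /ind ltNge => /negbTE ->; rewrite mul0r.
split; first exact: measurable_cutoff.
exact: le_lt_trans (Lnorm2_cutoff_le n) (ltry _).
Qed.

Lemma normV_cutoff_lty (Lf : R) : (0 < 1 - 3 * Lf * h)%R ->
  ((1 - 3 * Lf * h)^-1 * expR (- (4^-1 * (rho * h))) < 1)%R ->
  normV P Lf h T (cutoff T h Rs) < +oo.
Proof.
move=> a_gt0 q_lt1.
have q_ge0 : (0 <= (1 - 3 * Lf * h)^-1 * expR (- (4^-1 * (rho * h))))%R.
  by rewrite mulr_ge0 ?expR_ge0// invr_ge0 ltW.
have phi_ge0 n : (0 <= phi Lf h (tgrid h n))%R.
  by rewrite phi_grid// exprn_ge0// invr_ge0 ltW.
apply: le_lt_trans (eseries_geometric_lty (M * fine (\int[P]_w G w) `^ 4^-1)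
  (introT andP (conj q_ge0 q_lt1))).
apply: lee_nneseries => [n _ _|n _]; first by rewrite mule_ge0 ?Lnorm_ge0 ?lee_fin.
rewrite (eq_Lnorm _ _ (g := EFin \o cutoff T h Rs n)); last first.
  by move=> w /=; rewrite indK.
apply: le_trans (lee_wpmul2l _ (Lnorm2_cutoff_le n)) _; first by rewrite lee_fin.
rewrite -EFinM lee_fin phi_grid// powRM ?expR_ge0 ?fine_integral_G_ge0//.
rewrite -(expRM (- (rho * tgrid h n))).
have -> : (- (rho * tgrid h n) / 4 = n%:R * - (4^-1 * (rho * h)))%R.
  by rewrite /tgrid; ring.
rewrite expRM_natl le_eqVlt; apply/orP; left; apply/eqP.
by rewrite exprMn; ring.
Qed.

End grid.

Theorem mainTheorem12 (d : measure_display) (Omega : measurableType d)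
  (R : realType) (P : probability Omega R) (F : R -> set (set Omega))
  (tau : Omega -> \bar R) (tauh : R -> Omega -> R) (Lf h0 rho h : R) :
  is_filtration F ->
  stopping_time F tau ->
  (forall h', 0 < h' <= h0 ->
     pi_valued h' (tauh h') /\ finite_stopping_time F (tauh h')) ->
  0 < Lf ->
  (* (h) *)
  0 < h0 -> h0 < Lf -> h0 < (12 * Lf)^-1 -> 0 < h <= h0 ->
  (* (R-q) with q = 4 *)
  4 * 4 * Lf < rho ->
  P.-integrable setT (fun w => expeR (rho%:E * tau w)%E) ->
  P.-integrable setT
    (fun w => ereal_sup [set (expR (rho * tauh h' w))%:E | h' in `]0, h0]]) ->
  (* (i) *)
  (forall (p : R) (Rs : nat -> Omega -> R),
     4 <= p ->
     (forall n, Gmeasurable (F (tgrid h n)) (Rs n)) ->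
     (forall n, inLp P p (Rs n)) ->
     (exists M : R, forall n,
        ('N[P]_(p%:E)[EFin \o (fun w => (ind (tauh h) (tgrid h n) w * Rs n w)%R)]
          <= M%:E)%E) ->
     let S := fun n w => ind (tauh h) (tgrid h n) w * Rs n w in
     in_V P F h (tauh h) S /\ (normV P Lf h (tauh h) S < +oo)%E)
  /\
  (* (ii) *)
  (forall S : nat -> Omega -> R,
     in_V P F h (tauh h) S -> (normV P Lf h (tauh h) S < +oo)%E ->
     (fun n : nat => ('N[P]_(1%:E)[EFin \o (fun w =>
         (phi Lf h (tgrid h n) * ind (tauh h) (tgrid h n) w * S n w ^+ 2)%R)])%E)
       @ \oo --> 0%E).
Proof.
move=> F_filt _ tauh_stop Lf_gt0 _ _ h0_lt hh0 rho_gt _ sup_int.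
have [h_gt0 h_le] := andP hh0; have [T_pi T_stop] := tauh_stop h hh0.
have u_gt0 : 0 < Lf * h by rewrite mulr_gt0.
have u_lt : 12 * (Lf * h) < 1.
  have c_gt0 : 0 < 12 * Lf by rewrite mulr_gt0.
  have := le_lt_trans h_le h0_lt.
  by rewrite -(ltr_pM2l c_gt0) mulfV ?gt_eqF// mulrA.
have a_gt0 : 0 < 1 - 3 * Lf * h by rewrite -mulrA; lra.
have rho_ge0 : 0 <= rho by apply: le_trans (ltW rho_gt); rewrite !mulr_ge0// ltW.
pose G w := ereal_sup [set (expR (rho * tauh h' w))%:E | h' in `]0, h0]].
have G_ge w : ((expR (rho * tauh h w))%:E <= G w)%E.
  by apply: ereal_sup_ubound; exists h => //; rewrite in_itv /= h_gt0.
split=> [p Rs p_ge4 Rs_adapted _ [M cutoff_bounded] S|S SV S_fin].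
  split.
    exact: (cutoff_in_V F_filt h_gt0 T_pi T_stop p_ge4 Rs_adapted cutoff_bounded
      rho_ge0 sup_int G_ge).
  apply: (normV_cutoff_lty F_filt h_gt0 T_pi T_stop p_ge4 Rs_adapted
    cutoff_bounded rho_ge0 sup_int G_ge a_gt0).
  exact: grid_ratio_lt1.
apply: (normV_lty_cvg0 F_filt h_gt0 T_pi T_stop _ SV S_fin) => n.
exact: phi_grid_ge1 (ltW Lf_gt0) h_gt0 a_gt0.
Qed.
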